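(* Let $(D,\chi)$ be a shaped oriented link diagram with flattening $\mathfrak f$, and let $c$ be a crossing of $D$ of sign $\epsilon$, with local parameters $\mu_1,\mu_2$ (of the strands through $1$ and $2$), $\beta_1,\beta_2,\beta_{1'},\beta_{2'}$, $\gamma_N,\gamma_W,\gamma_S,\gamma_E$. If one of these local parameters $x$ is replaced by $x+k$ with $k\in\mathbb Z$ (all others unchanged), then $\mathcal V(c,\mathfrak f)$ changes by $2\pi^2 i\,k$ times the corresponding coefficient below (modulo $2\pi^2 i\mathbb Z$): \[ \begin{aligned} \mu_1&:\ -\epsilon(\beta_{1'}-\beta_1)+\gamma_W-\gamma_S, & \mu_2&:\ \epsilon(\beta_{2'}-\beta_2)+\gamma_S-\gamma_E,\\ \beta_1&:\ \gamma_W-\gamma_N-\epsilon\mu_1, & \beta_2&:\ \gamma_S-\gamma_W+\epsilon\mu_2,\\ \beta_{1'}&:\ \gamma_E-\gamma_S+\epsilon\mu_1, & \beta_{2'}&:\ \gamma_N-\gamma_E-\epsilon\mu_2,\\ \gamma_N&:\ \beta_1-\beta_{2'}, & \gamma_W&:\ \beta_2-\beta_1-\mu_1,\\ \gamma_S&:\ \beta_{1'}+\mu_1-\beta_2-\mu_2, & \gamma_E&:\ \beta_{2'}+\mu_2-\beta_{1'}. \end{aligned} \]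
   Context: Oriented link diagram $D$; segments are edges of its underlying $4$-valent planar graph, regions are components of the complement. At each crossing, rotate so both strands point right; label incoming upper-left segment $1$, incoming lower-left segment $2$, outgoing lower-right $1'$ (continuation of $1$), outgoing upper-right $2'$ (continuation of $2$); regions $N$ (top), $S$ (bottom), $W$ (left), $E$ (right); $\epsilon=\pm1$ the crossing sign. A shaping assigns $\chi_i=(a_i,b_i,m_i)\in(\mathbb C^\times)^3$ to segments with, at each crossing, $m_{1'}=m_1,m_{2'}=m_2$ and (positive) $A=1-\frac{m_1b_1}{b_2}(1-\frac{a_1}{m_1})(1-\frac{1}{m_2a_2})$, $a_{1'}=a_1/A$, $a_{2'}=a_2A$, $b_{1'}=\frac{m_2b_2}{m_1}(1-m_2a_2(1-\frac{b_2}{m_1b_1}))^{-1}$, $b_{2'}=b_1(1-\frac{m_1}{a_1}(1-\frac{b_2}{m_1b_1}))$, or (negative) $\tilde A=1-\frac{b_2}{m_1b_1}(1-m_1a_1)(1-\frac{m_2}{a_2})$, $a_{1'}=a_1/\tilde A$, $a_{2'}=a_2\tilde A$, $b_{1'}=\frac{m_2b_2}{m_1}(1-\frac{a_2}{m_2}(1-\frac{m_1b_1}{b_2}))$, $b_{2'}=b_1(1-\frac{1}{m_1a_1}(1-\frac{m_1b_1}{b_2}))^{-1}$, all finite nonzero. Pinched: $b_{2'}=b_1$. Flattening: $\mu_j$ per component ($e^{2\pi i\mu_j}=m_j$), $\beta_k$ per segment ($e^{2\pi i\beta_k}=b_k$), $\gamma_R$ per region ($e^{2\pi i(\gamma_{R'}-\gamma_R)}=a_k$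 when $R',R$ lie right, left of segment $k$), $\kappa$ at each non-pinched crossing with $e^{2\pi i\kappa}=e^{2\pi i\gamma_N}/(1-(b_{2'}/b_1)^\epsilon)$. Lifted dilogarithm: for $w=e^{\zeta^0}\ne1$, $e^{\zeta^1}(1-w)=1$, $p^0=(\zeta^0-\operatorname{Log}w)/2\pi i$, $p^1=(\zeta^1+\operatorname{Log}(1-w))/2\pi i$, $\mathcal L(\zeta^0,\zeta^1)=\operatorname{Li}_2(w)+\frac12\operatorname{Log}w\operatorname{Log}(1-w)-\frac{\pi^2}6+\pi i(p^0\operatorname{Log}(1-w)+p^1\operatorname{Log}w)\in\mathbb C/2\pi^2\mathbb Z$ (continuous extension understood). Non-pinched crossing: $\zeta_N^0=2\pi i\epsilon(\beta_{2'}-\beta_1)$, $\zeta_N^1=2\pi i(\kappa-\gamma_N)$; $\zeta_W^0=2\pi i\epsilon(\beta_2-\beta_1-\mu_1)$, $\zeta_W^1=2\pi i(\kappa-\gamma_W+\epsilon\mu_1)$; $\zeta_S^0=2\pi i\epsilon(\beta_2-\beta_{1'}+\mu_2-\mu_1)$, $\zeta_S^1=2\pi i(\kappa-\gamma_S+\epsilon(\mu_1-\mu_2))$; $\zeta_E^0=2\pi i\epsilon(\beta_{2'}-\beta_{1'}+\mu_2)$, $\zeta_E^1=2\pi i(\kappa-\gamma_E-\epsilon\mu_2)$; $\mathcal V(c,\mathfrak f)=-i\epsilon[\mathcal L(\zeta_N^0,\zeta_N^1)-\mathcal L(\zeta_W^0,\zeta_W^1)+\mathcal L(\zeta_S^0,\zeta_S^1)-\mathcal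 L(\zeta_E^0,\zeta_E^1)]\in\mathbb C/2\pi^2 i\mathbb Z$. Pinched crossing: $\mathcal V(c,\mathfrak f)=2\pi^2 i[\beta_1(\gamma_W-\gamma_N)-\beta_{1'}(\gamma_S-\gamma_E)+\beta_2(\gamma_S-\gamma_W)-\beta_{2'}(\gamma_E-\gamma_N)-\mu_1(\epsilon(\beta_1-\beta_{1'}+\mu_2)+\gamma_S-\gamma_W)-\mu_2(\epsilon(\beta_{2'}-\beta_2+\mu_1)+\gamma_E-\gamma_S)]$. *)

From Stdlib Require Import Reals ZArith.
From Coquelicot Require Import Coquelicot.

Open Scope C_scope.

Definition Cexp (z : C) : C :=
  (exp (fst z) * cos (snd z), exp (fst z) * sin (snd z))%R.

(** principal argument, with values in (-PI, PI] *)
Definition Arg (z : C) : R :=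
  let x := fst z in let y := snd z in
  if Rlt_dec 0 x then atan (y / x)
  else if Rlt_dec x 0 then
    (if Rle_dec 0 y then atan (y / x) + PI else atan (y / x) - PI)%R
  else if Rlt_dec 0 y then (PI / 2)%R
  else if Rlt_dec y 0 then (- (PI / 2))%R
  else 0%R.

Definition CLog (z : C) : C := (ln (Cmod z), Arg z).

Definition CRInt01 (f : R -> C) : C :=
  (RInt (fun t => fst (f t)) 0 1, RInt (fun t => snd (f t)) 0 1).

(** Dilogarithm (principal branch):
    Li2 w = - \int_0^w Log(1-u)/u du, along the segment u = t w, for w not in
    (1, +oo).  For real w = x > 1 (on the branch cut) we take the value
    consistent with the principal Log (Arg in (-PI,PI]) of 1 - w, i.e. the
    limit from below, computed along the path u(t) = t x - i t (1 - t). *)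
Definition Li2 (w : C) : C :=
  if Rlt_dec 1 (fst w) then
    if Req_EM_T (snd w) 0 then
      let x := fst w in
      - CRInt01 (fun t =>
          let u : C := (t * x, - (t * (1 - t)))%R in
          let du : C := (x, - (1 - 2 * t))%R in
          CLog (1 - u) / u * du)
    else - CRInt01 (fun t => CLog (1 - RtoC t * w) / RtoC t)
  else - CRInt01 (fun t => CLog (1 - RtoC t * w) / RtoC t).

Definition twopii : C := 2 * RtoC PI * Ci.

(** Lifted dilogarithm L(zeta0, zeta1), a representative in C of the value
    in C / 2 pi^2 Z. *)
Definition Lhat (z0 z1 : C) : C :=
  let w := Cexp z0 in
  let p0 := (z0 - CLog w) / twopii in
  let p1 := (z1 + CLog (1 - w)) / twopii in
  Li2 w + (1 / 2) * CLog w * CLog (1 - w) - RtoC (PI ^ 2 / 6)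
  + RtoC PI * Ci * (p0 * CLog (1 - w) + p1 * CLog w).

Definition E2 (x : C) : C := Cexp (twopii * x).

(** shape parameters chi = (a, b, m) of a segment *)
Record shape := Shape { sa : C; sb : C; sm : C }.

(** crossing sign: [pos = true] for epsilon = +1, false for epsilon = -1 *)
Definition epsC (pos : bool) : C := if pos then 1 else -1.

Definition shape_nz (s : shape) : Prop :=
  sa s <> 0 /\ sb s <> 0 /\ sm s <> 0.

(** shaping equations at a crossing, with incoming segments 1 (upper left),
    2 (lower left) and outgoing 1' (lower right, continuing 1),
    2' (upper right, continuing 2). *)
Definition shaping_at (pos : bool) (s1 s2 s1' s2' : shape) : Prop :=
  shape_nz s1 /\ shape_nz s2 /\ shape_nz s1' /\ shape_nz s2' /\
  sm s1' = sm s1 /\ sm s2' = sm s2 /\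
  let a1 := sa s1 in let b1 := sb s1 in let m1 := sm s1 in
  let a2 := sa s2 in let b2 := sb s2 in let m2 := sm s2 in
  if pos then
    let A := 1 - m1 * b1 / b2 * (1 - a1 / m1) * (1 - 1 / (m2 * a2)) in
    A <> 0 /\
    sa s1' = a1 / A /\ sa s2' = a2 * A /\
    (1 - m2 * a2 * (1 - b2 / (m1 * b1))) <> 0 /\
    sb s1' = m2 * b2 / m1 * / (1 - m2 * a2 * (1 - b2 / (m1 * b1))) /\
    sb s2' = b1 * (1 - m1 / a1 * (1 - b2 / (m1 * b1)))
  else
    let A := 1 - b2 / (m1 * b1) * (1 - m1 * a1) * (1 - m2 / a2) in
    A <> 0 /\
    sa s1' = a1 / A /\ sa s2' = a2 * A /\
    sb s1' = m2 * b2 / m1 * (1 - a2 / m2 * (1 - m1 * b1 / b2)) /\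
    (1 - 1 / (m1 * a1) * (1 - m1 * b1 / b2)) <> 0 /\
    sb s2' = b1 * / (1 - 1 / (m1 * a1) * (1 - m1 * b1 / b2)).

Definition pinched (s1 s2' : shape) : Prop := sb s2' = sb s1.

(** local flattening parameters at a crossing:
    mu1, mu2 (components of the strands through 1 and 2),
    beta_1, beta_2, beta_1', beta_2', gamma_N, gamma_W, gamma_S, gamma_E,
    and kappa (only meaningful at a non-pinched crossing). *)
Record flat := Flat {
  mu1 : C; mu2 : C;
  be1 : C; be2 : C; be1' : C; be2' : C;
  gN : C; gW : C; gS : C; gE : C;
  kap : C }.

Definition ratio_eps (pos : bool) (s1 s2' : shape) : C :=
  if pos then sb s2' / sb s1 else sb s1 / sb s2'.

(** flattening conditions at the crossing.  Regions: segment 1 has W on its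
    right and N on its left, 2 has S right / W left, 1' has S right / E left,
    2' has E right / N left. *)
Definition flattening_at (pos : bool) (s1 s2 s1' s2' : shape) (f : flat) : Prop :=
  E2 (mu1 f) = sm s1 /\ E2 (mu2 f) = sm s2 /\
  E2 (be1 f) = sb s1 /\ E2 (be2 f) = sb s2 /\
  E2 (be1' f) = sb s1' /\ E2 (be2' f) = sb s2' /\
  E2 (gW f - gN f) = sa s1 /\ E2 (gS f - gW f) = sa s2 /\
  E2 (gS f - gE f) = sa s1' /\ E2 (gE f - gN f) = sa s2' /\
  (~ pinched s1 s2' -> E2 (kap f) = E2 (gN f) / (1 - ratio_eps pos s1 s2')).

Definition Ceq_dec (z w : C) : {z = w} + {z <> w}.
Proof.
  destruct z as [x y], w as [x' y'].
  destruct (Req_EM_T x x') as [e1|n1].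
  - destruct (Req_EM_T y y') as [e2|n2].
    + left; subst; reflexivity.
    + right; intro H; inversion H; contradiction.
  - right; intro H; inversion H; contradiction.
Defined.

(** the crossing contribution V(c, f), a representative in C of the value in
    C / 2 pi^2 i Z *)
Definition crossing_volume (pos : bool) (s1 s2' : shape) (f : flat) : C :=
  let e := epsC pos in
  if Ceq_dec (sb s2') (sb s1) then
    2 * RtoC (PI ^ 2) * Ci *
      (be1 f * (gW f - gN f) - be1' f * (gS f - gE f)
       + be2 f * (gS f - gW f) - be2' f * (gE f - gN f)
       - mu1 f * (e * (be1 f - be1' f + mu2 f) + gS f - gW f)
       - mu2 f * (e * (be2' f - be2 f + mu1 f) + gE f - gS f))
  else
    let zN0 := twopii * e * (be2' f - be1 f) in
    let zN1 := twopii * (kap f - gN f) in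
    let zW0 := twopii * e * (be2 f - be1 f - mu1 f) in
    let zW1 := twopii * (kap f - gW f + e * mu1 f) in
    let zS0 := twopii * e * (be2 f - be1' f + mu2 f - mu1 f) in
    let zS1 := twopii * (kap f - gS f + e * (mu1 f - mu2 f)) in
    let zE0 := twopii * e * (be2' f - be1' f + mu2 f) in
    let zE1 := twopii * (kap f - gE f - e * mu2 f) in
    - Ci * e * (Lhat zN0 zN1 - Lhat zW0 zW1 + Lhat zS0 zS1 - Lhat zE0 zE1).

Inductive param :=
  Pmu1 | Pmu2 | Pbe1 | Pbe2 | Pbe1' | Pbe2' | PgN | PgW | PgS | PgE.

Definition shift_param (p : param) (k : Z) (f : flat) : flat :=
  let K := RtoC (IZR k) in
  let '(Flat m1 m2 b1 b2 b1' b2' n w s e kp) := f in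
  match p with
  | Pmu1 => Flat (m1 + K) m2 b1 b2 b1' b2' n w s e kp
  | Pmu2 => Flat m1 (m2 + K) b1 b2 b1' b2' n w s e kp
  | Pbe1 => Flat m1 m2 (b1 + K) b2 b1' b2' n w s e kp
  | Pbe2 => Flat m1 m2 b1 (b2 + K) b1' b2' n w s e kp
  | Pbe1' => Flat m1 m2 b1 b2 (b1' + K) b2' n w s e kp
  | Pbe2' => Flat m1 m2 b1 b2 b1' (b2' + K) n w s e kp
  | PgN => Flat m1 m2 b1 b2 b1' b2' (n + K) w s e kp
  | PgW => Flat m1 m2 b1 b2 b1' b2' n (w + K) s e kp
  | PgS => Flat m1 m2 b1 b2 b1' b2' n w (s + K) e kp
  | PgE => Flat m1 m2 b1 b2 b1' b2' n w s (e + K) kp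
  end.

Definition vol_coef (pos : bool) (p : param) (f : flat) : C :=
  let e := epsC pos in
  match p with
  | Pmu1 => - e * (be1' f - be1 f) + gW f - gS f
  | Pmu2 => e * (be2' f - be2 f) + gS f - gE f
  | Pbe1 => gW f - gN f - e * mu1 f
  | Pbe2 => gS f - gW f + e * mu2 f
  | Pbe1' => gE f - gS f + e * mu1 f
  | Pbe2' => gN f - gE f - e * mu2 f
  | PgN => be1 f - be2' f
  | PgW => be2 f - be1 f - mu1 f
  | PgS => be1' f + mu1 f - be2 f - mu2 f
  | PgE => be2' f + mu2 f - be1' f
  end.

From Pilot Require Import Defs.
From Stdlib Require Import Reals ZArith Lra.
From Coquelicot Require Import Coquelicot.
Open Scope C_scope.

(* At a non-pinched crossing, V is -iε times an alternating sum of four lifted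
   dilogarithms L(ζ_R^0, ζ_R^1), one per region R.  The shaping equations and the
   defining equation of κ give e^{ζ_R^1} (1 - e^{ζ_R^0}) = 1 in every region, and
   under this condition shifting (ζ^0, ζ^1) by 2πi (a, b), a, b ∈ ℤ, changes L by
   πi (b ζ^0 - a ζ^1) modulo 2π²ℤ.  A shift of the local parameters by integers
   shifts each ζ_R by such a pair, and the four changes add up to 2π²i times the
   stated linear coefficient.  At a pinched crossing, V is an explicit quadratic form
   in the parameters; pinching forces b_2 = m_1 b_1 and b_{1'} = m_2 b_1, so that
   β_2 - β_1 - μ_1, β_{1'} - β_1 - μ_2 and β_{2'} - β_1 are integers, and on these
   relations the change of the quadratic form differs from the linear coefficient
   by an integer.  Both arguments work verbatim for a simultaneous integral shift
   of all parameters, κ included. *)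

Lemma Ci_sqr : Ci * Ci = -1.
Proof. apply injective_projections; simpl; ring. Qed.

Lemma twopii_neq_0 : twopii <> 0.
Proof.
  intro H; apply (f_equal Im) in H; unfold twopii, Im in H; simpl in H.
  pose proof PI_RGT_0; nra.
Qed.

Lemma Cexp_add (z w : C) : Cexp (z + w) = Cexp z * Cexp w.
Proof.
  destruct z as [x y], w as [u v]; unfold Cexp, Cmult, Cplus; simpl.
  rewrite exp_plus, cos_plus, sin_plus.
  apply injective_projections; simpl; ring.
Qed.

Lemma Cexp_neq_0 (z : C) : Cexp z <> 0.
Proof.
  destruct z as [x y]; intro H; unfold Cexp in H; injection H as Hc Hs.
  pose proof (exp_pos x); pose proof (sin2_cos2 y); unfold Rsqr in *.
  apply Rmult_integral in Hc as [Hc | Hc]; apply Rmult_integral in Hs as [Hs | Hs]; nra.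
Qed.

Lemma Cexp_twopii_IZR (n : Z) : Cexp (twopii * IZR n) = 1.
Proof.
  replace (twopii * IZR n) with ((0, 2 * (IZR n * PI))%R : C)
    by (apply injective_projections; simpl; ring).
  unfold Cexp; simpl.
  rewrite exp_0, cos_2a_sin, sin_2a, (sin_eq_0_1 (IZR n * PI)) by (exists n; reflexivity).
  apply injective_projections; simpl; ring.
Qed.

Lemma Arg_polar (r y : R) : (0 < r)%R -> (- PI < y <= PI)%R ->
  Arg (r * cos y, r * sin y)%R = y.
Proof.
  intros Hr [Hlo Hhi]; pose proof PI_RGT_0; unfold Arg; simpl.
  destruct (Rtotal_order y (- (PI / 2))) as [Hy | [-> | Hy]].
  - assert (Hc : (cos y < 0)%R) by (rewrite <- (cos_period y 1); simpl; apply cos_lt_0; lra).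
    assert (Hs : (sin y < 0)%R) by (apply sin_lt_0_var; lra).
    destruct (Rlt_dec 0 (r * cos y)); [nra |].
    destruct (Rlt_dec (r * cos y) 0); [| nra].
    destruct (Rle_dec 0 (r * sin y)); [nra |].
    replace (r * sin y / (r * cos y))%R with (tan (y + PI))
      by (unfold tan; rewrite neg_sin, neg_cos; field; lra).
    rewrite atan_tan; lra.
  - rewrite cos_neg, sin_neg, cos_PI2, sin_PI2, Rmult_0_r.
    repeat match goal with |- context [Rlt_dec ?a ?b] => destruct (Rlt_dec a b) end; lra.
  - destruct (Rtotal_order y (PI / 2)) as [Hy' | [Hy' | Hy']].
    + assert (Hc : (0 < cos y)%R) by (apply cos_gt_0; lra).
      destruct (Rlt_dec 0 (r * cos y)); [| nra].
      replace (r * sin y / (r * cos y))%R with (tan y) by (unfold tan; field; lra).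
      apply atan_tan; lra.
    + subst y; rewrite cos_PI2, sin_PI2, Rmult_0_r, Rmult_1_r.
      repeat match goal with |- context [Rlt_dec ?a ?b] => destruct (Rlt_dec a b) end; lra.
    + assert (Hc : (cos y < 0)%R) by (apply cos_lt_0; lra).
      assert (Hs : (0 <= sin y)%R) by (apply sin_ge_0; lra).
      destruct (Rlt_dec 0 (r * cos y)); [nra |].
      destruct (Rlt_dec (r * cos y) 0); [| nra].
      destruct (Rle_dec 0 (r * sin y)); [| nra].
      replace (r * sin y / (r * cos y))%R with (tan (y - PI))
        by (unfold tan; rewrite sin_minus, cos_minus, sin_PI, cos_PI; field; lra).
      rewrite atan_tan; lra.
Qed.

Lemma CLog_Cexp_principal (x y : R) : (- PI < y <= PI)%R -> CLog (Cexp (x, y)) = (x, y).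
Proof.
  intro Hy; unfold CLog, Cexp; simpl.
  rewrite Arg_polar by (apply exp_pos || exact Hy).
  replace (Cmod _) with (exp x); [now rewrite ln_exp |].
  unfold Cmod; simpl; rewrite <- (sqrt_square (exp x)) at 1 by (left; apply exp_pos).
  f_equal; pose proof (sin2_cos2 y); unfold Rsqr in *; nra.
Qed.

Lemma exists_principal_angle (y : R) : exists n : Z, (- PI < y - 2 * IZR n * PI <= PI)%R.
Proof.
  pose proof PI_RGT_0.
  set (t := ((PI - y) / (2 * PI))%R).
  destruct (archimed t) as [Hup Hup'].
  exists (1 - up t)%Z; rewrite minus_IZR.
  replace (y - 2 * (1 - IZR (up t)) * PI)%R with (- PI + 2 * PI * (IZR (up t) - t))%R
    by (unfold t; field; lra).
  nra.
Qed.

Lemma CLog_Cexp (z : C) : exists n : Z, CLog (Cexp z) = z - twopii * IZR n.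
Proof.
  destruct z as [x y], (exists_principal_angle y) as [n Hn]; exists n.
  replace (x, y) with ((x, y - 2 * IZR n * PI)%R + twopii * IZR n)
    by (apply injective_projections; simpl; ring).
  rewrite Cexp_add, Cexp_twopii_IZR, Cmult_1_r, CLog_Cexp_principal by exact Hn.
  apply injective_projections; simpl; ring.
Qed.

Lemma E2_add (x y : C) : E2 (x + y) = E2 x * E2 y.
Proof. unfold E2; rewrite <- Cexp_add; f_equal; ring. Qed.

Lemma E2_neq_0 (x : C) : E2 x <> 0.
Proof. apply Cexp_neq_0. Qed.

Lemma E2_IZR (n : Z) : E2 (IZR n) = 1.
Proof. apply Cexp_twopii_IZR. Qed.

Lemma E2_sub (x y : C) : E2 (x - y) = E2 x / E2 y.
Proof.
  pose proof (E2_neq_0 y).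
  replace (E2 x) with (E2 (x - y) * E2 y) by (rewrite <- E2_add; f_equal; ring).
  field; assumption.
Qed.

Lemma E2_opp (x : C) : E2 (- x) = / E2 x.
Proof.
  replace (- x) with (0 - x) by ring.
  rewrite E2_sub, (E2_IZR 0); unfold Cdiv; ring.
Qed.

Lemma CLog_E2 (u : C) : exists n : Z, CLog (E2 u) = twopii * (u - IZR n).
Proof.
  destruct (CLog_Cexp (twopii * u)) as [n Hn]; exists n.
  unfold E2; rewrite Hn; ring.
Qed.

Lemma E2_eq_mod_Z (x y : C) : E2 x = E2 y -> exists n : Z, x = y + IZR n.
Proof.
  intro Hxy.
  destruct (CLog_E2 x) as [m Hm], (CLog_E2 y) as [n Hn].
  exists (m - n)%Z; rewrite minus_IZR, RtoC_minus.
  rewrite Hxy, Hn in Hm.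
  replace x with (/ twopii * (twopii * (x - IZR m)) + IZR m)
    by (field; apply twopii_neq_0).
  rewrite <- Hm; field; apply twopii_neq_0.
Qed.

Definition is_integer (z : C) : Prop := exists n : Z, z = IZR n.

Lemma is_integer_IZR (n : Z) : is_integer (IZR n).
Proof. exists n; reflexivity. Qed.

Lemma is_integer_add (x y : C) : is_integer x -> is_integer y -> is_integer (x + y).
Proof. intros [m ->] [n ->]; exists (m + n)%Z; now rewrite plus_IZR, RtoC_plus. Qed.

Lemma is_integer_opp (x : C) : is_integer x -> is_integer (- x).
Proof. intros [n ->]; exists (- n)%Z; now rewrite opp_IZR, RtoC_opp. Qed.

Lemma is_integer_sub (x y : C) : is_integer x -> is_integer y -> is_integer (x - y).
Proof. intros; apply is_integer_add; [| apply is_integer_opp]; assumption. Qed.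

Lemma is_integer_mul (x y : C) : is_integer x -> is_integer y -> is_integer (x * y).
Proof. intros [m ->] [n ->]; exists (m * n)%Z; now rewrite mult_IZR, RtoC_mult. Qed.

Lemma is_integer_epsC (pos : bool) : is_integer (epsC pos).
Proof. destruct pos; apply is_integer_IZR. Qed.

Ltac prove_integer :=
  repeat first
    [ assumption | apply is_integer_IZR | apply is_integer_epsC
    | apply is_integer_add | apply is_integer_sub | apply is_integer_opp
    | apply is_integer_mul ].

Lemma E2_integer (x n : C) : is_integer n -> E2 (x + n) = E2 x.
Proof. intros [k ->]; rewrite E2_add, E2_IZR; apply Cmult_1_r. Qed.

(* The shift leaves w fixed and moves p^0, p^1 by a, b; the hypothesis identifies
   Log (1 - w) with -ζ^1 modulo 2πiℤ, just as Log w is ζ^0 modulo 2πiℤ. *)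
Lemma Lhat_shift (u0 u1 a b : C) :
  E2 u1 * (1 - E2 u0) = 1 -> is_integer a -> is_integer b ->
  exists n : C, is_integer n /\
    Lhat (twopii * (u0 + a)) (twopii * (u1 + b))
    = Lhat (twopii * u0) (twopii * u1) - 2 * RtoC (PI ^ 2) * (b * u0 - a * u1 + n).
Proof.
  intros Hflat Ha Hb.
  assert (H1w : 1 - E2 u0 = E2 (- u1)).
  { rewrite E2_opp.
    replace (1 - E2 u0) with (/ E2 u1 * (E2 u1 * (1 - E2 u0)))
      by (field; apply E2_neq_0).
    rewrite Hflat; ring. }
  destruct (CLog_E2 u0) as [n0 H0], (CLog_E2 (- u1)) as [n1 H1].
  exists (- (a * IZR n1 + b * IZR n0)); split; [prove_integer |].
  unfold Lhat; fold (E2 (u0 + a)) (E2 u0).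
  rewrite (E2_integer u0 a Ha), H1w, H0, H1.
  rewrite RtoC_pow; unfold twopii; field [Ci_sqr].
  split; [exact Ci_nz | intro H; injection H; exact PI_neq0].
Qed.

Definition flat_add (f g : flat) : flat :=
  Flat (mu1 f + mu1 g) (mu2 f + mu2 g)
       (be1 f + be1 g) (be2 f + be2 g) (be1' f + be1' g) (be2' f + be2' g)
       (gN f + gN g) (gW f + gW g) (gS f + gS g) (gE f + gE g) (kap f + kap g).

Definition integral_flat (g : flat) : Prop :=
  is_integer (mu1 g) /\ is_integer (mu2 g) /\
  is_integer (be1 g) /\ is_integer (be2 g) /\ is_integer (be1' g) /\ is_integer (be2' g) /\
  is_integer (gN g) /\ is_integer (gW g) /\ is_integer (gS g) /\ is_integer (gE g) /\
  is_integer (kap g).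

Definition lin_coef (pos : bool) (g f : flat) : C :=
  mu1 g * vol_coef pos Pmu1 f + mu2 g * vol_coef pos Pmu2 f
  + be1 g * vol_coef pos Pbe1 f + be2 g * vol_coef pos Pbe2 f
  + be1' g * vol_coef pos Pbe1' f + be2' g * vol_coef pos Pbe2' f
  + gN g * vol_coef pos PgN f + gW g * vol_coef pos PgW f
  + gS g * vol_coef pos PgS f + gE g * vol_coef pos PgE f.

(** * Pinched crossings *)

Lemma shaping_pinched (pos : bool) (s1 s2 s1' s2' : shape) :
  shaping_at pos s1 s2 s1' s2' -> pinched s1 s2' ->
  sb s2 = sm s1 * sb s1 /\ sb s1' = sm s2 * sb s1.
Proof.
  unfold pinched.
  intros [[Ha1 [Hb1 Hm1]] [[_ [Hb2 Hm2]] [_ [_ [_ [_ Hsh]]]]]] Hp.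
  destruct pos; cbv zeta in Hsh.
  - destruct Hsh as [_ [_ [_ [_ [Eb1' Eb2']]]]].
    assert (Ht : 1 - sb s2 / (sm s1 * sb s1) = 0).
    { transitivity ((sb s1 - sb s2') * sa s1 / (sm s1 * sb s1)).
      - rewrite Eb2'; field; auto.
      - rewrite Hp; field; auto. }
    assert (Eb2 : sb s2 = sm s1 * sb s1).
    { replace (sb s2) with (sm s1 * sb s1 * (1 - (1 - sb s2 / (sm s1 * sb s1))))
        by (field; auto).
      rewrite Ht; ring. }
    split; [exact Eb2 |].
    rewrite Eb1', Ht, Eb2; field; auto.
  - destruct Hsh as [_ [_ [_ [Eb1' [Hden Eb2']]]]].
    set (D := 1 - 1 / (sm s1 * sa s1) * (1 - sm s1 * sb s1 / sb s2)) in *.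
    assert (HD : D = 1).
    { rewrite Hp in Eb2'.
      replace D with (sb s1 / (sb s1 * / D)) by (field; auto).
      rewrite <- Eb2'; field; auto. }
    assert (Ht : 1 - sm s1 * sb s1 / sb s2 = 0).
    { transitivity (sm s1 * sa s1 * (1 - D)).
      - unfold D; field; auto.
      - rewrite HD; ring. }
    assert (Eb2 : sb s2 = sm s1 * sb s1).
    { replace (sm s1 * sb s1) with (sb s2 * (1 - (1 - sm s1 * sb s1 / sb s2)))
        by (field; auto).
      rewrite Ht; ring. }
    split; [exact Eb2 |].
    rewrite Eb1', Ht, Eb2; field; auto.
Qed.

Lemma flattening_pinched (pos : bool) (s1 s2 s1' s2' : shape) (f : flat) :
  shaping_at pos s1 s2 s1' s2' -> flattening_at pos s1 s2 s1' s2' f -> pinched s1 s2' ->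
  exists N1 N2 N3 : Z,
    be2 f = be1 f + mu1 f + IZR N1 /\ be1' f = be1 f + mu2 f + IZR N2 /\
    be2' f = be1 f + IZR N3.
Proof.
  intros Hs [Em1 [Em2 [Eb1 [Eb2 [Eb1' [Eb2' _]]]]]] Hp.
  destruct (shaping_pinched pos s1 s2 s1' s2' Hs Hp) as [Hb2 Hb1'].
  destruct (E2_eq_mod_Z (be2 f) (be1 f + mu1 f)) as [N1 H1].
  { rewrite E2_add, Eb2, Eb1, Em1, Hb2; ring. }
  destruct (E2_eq_mod_Z (be1' f) (be1 f + mu2 f)) as [N2 H2].
  { rewrite E2_add, Eb1', Eb1, Em2, Hb1'; ring. }
  destruct (E2_eq_mod_Z (be2' f) (be1 f)) as [N3 H3].
  { rewrite Eb2', Eb1; exact Hp. }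
  exists N1, N2, N3; auto.
Qed.

Definition pinched_form (e : C) (f : flat) : C :=
  be1 f * (gW f - gN f) - be1' f * (gS f - gE f)
  + be2 f * (gS f - gW f) - be2' f * (gE f - gN f)
  - mu1 f * (e * (be1 f - be1' f + mu2 f) + gS f - gW f)
  - mu2 f * (e * (be2' f - be2 f + mu1 f) + gE f - gS f).

Lemma crossing_volume_pinched (pos : bool) (s1 s2' : shape) (f : flat) :
  pinched s1 s2' ->
  crossing_volume pos s1 s2' f = 2 * RtoC (PI ^ 2) * Ci * pinched_form (epsC pos) f.
Proof.
  intro Hp; unfold crossing_volume.
  destruct (Defs.Ceq_dec (sb s2') (sb s1)); [reflexivity | contradiction].
Qed.

Lemma pinched_form_shift (pos : bool) (f g : flat) (N1 N2 N3 : Z) :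
  integral_flat g ->
  be2 f = be1 f + mu1 f + IZR N1 -> be1' f = be1 f + mu2 f + IZR N2 ->
  be2' f = be1 f + IZR N3 ->
  is_integer (pinched_form (epsC pos) (flat_add f g) - pinched_form (epsC pos) f
              - lin_coef pos g f).
Proof.
  intros Hg H1 H2 H3.
  set (defect := fun h => pinched_form (epsC pos) (flat_add h g)
                          - pinched_form (epsC pos) h - lin_coef pos g h).
  change (is_integer (defect f)).
  (* The defect is affine in [f], and its linear part vanishes on the solutions
     of the pinched relations; so it may be evaluated at an integral point. *)
  assert (Hdefect : defect f = defect (Flat 0 0 0 (IZR N1) (IZR N2) (IZR N3) 0 0 0 0 0)).
  { destruct f; simpl in *; subst.
    unfold defect, pinched_form, lin_coef, vol_coef, flat_add; simpl; ring. }
  rewrite Hdefect; unfold defect, pinched_form, lin_coef, vol_coef, flat_add; simpl.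
  unfold integral_flat in Hg; decompose [and] Hg; prove_integer.
Qed.

Lemma crossing_volume_shift_pinched (pos : bool) (s1 s2 s1' s2' : shape) (f g : flat) :
  shaping_at pos s1 s2 s1' s2' -> flattening_at pos s1 s2 s1' s2' f -> pinched s1 s2' ->
  integral_flat g ->
  exists n : C, is_integer n /\
    crossing_volume pos s1 s2' (flat_add f g)
    = crossing_volume pos s1 s2' f + 2 * RtoC (PI ^ 2) * Ci * (lin_coef pos g f + n).
Proof.
  intros Hs Hf Hp Hg.
  destruct (flattening_pinched pos s1 s2 s1' s2' f Hs Hf Hp) as [N1 [N2 [N3 [H1 [H2 H3]]]]].
  eexists; split; [exact (pinched_form_shift pos f g N1 N2 N3 Hg H1 H2 H3) |].
  rewrite !crossing_volume_pinched by exact Hp; ring.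
Qed.

(** * Non-pinched crossings *)

Inductive region := RN | RW | RS | RE.

(* [zeta0 e f R] and [zeta1 e f R] are the paper's ζ_R^0 / 2πi and ζ_R^1 / 2πi. *)
Definition zeta0 (e : C) (f : flat) (R : region) : C :=
  match R with
  | RN => e * (be2' f - be1 f)
  | RW => e * (be2 f - be1 f - mu1 f)
  | RS => e * (be2 f - be1' f + mu2 f - mu1 f)
  | RE => e * (be2' f - be1' f + mu2 f)
  end.

Definition zeta1 (e : C) (f : flat) (R : region) : C :=
  match R with
  | RN => kap f - gN f
  | RW => kap f - gW f + e * mu1 f
  | RS => kap f - gS f + e * (mu1 f - mu2 f)
  | RE => kap f - gE f - e * mu2 f
  end.

Definition alt_sum (F : region -> C) : C := F RN - F RW + F RS - F RE.

Lemma crossing_volume_unpinched (pos : bool) (s1 s2' : shape) (f : flat) :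
  ~ pinched s1 s2' ->
  crossing_volume pos s1 s2' f
  = - Ci * epsC pos * alt_sum (fun R => Lhat (twopii * zeta0 (epsC pos) f R)
                                             (twopii * zeta1 (epsC pos) f R)).
Proof.
  intro Hnp; unfold crossing_volume.
  destruct (Defs.Ceq_dec (sb s2') (sb s1)); [contradiction |].
  cbv beta iota delta [alt_sum zeta0 zeta1]; rewrite ?Cmult_assoc; reflexivity.
Qed.

Lemma Cmult_neq_0_eq (x y c : C) : x <> 0 -> c <> 0 -> y = c * x -> y <> 0.
Proof. intros Hx Hc ->; apply Cmult_neq_0; assumption. Qed.

(* With x_R = e^{ζ_R^0}, each identity reads 1 - x_R = (1 - x_N) * (a monomial in the
   a's and m's); this is what turns the equation of κ, i.e. the flatness condition
   at N, into the flatness conditions at W, S and E. *)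
Lemma shaping_regions_pos (s1 s2 s1' s2' : shape) :
  shaping_at true s1 s2 s1' s2' ->
  1 - sb s2 / sb s1 / sm s1 = (1 - sb s2' / sb s1) * (sa s1 / sm s1) /\
  1 - sb s2 / sb s1' * sm s2 / sm s1
    = (1 - sb s2' / sb s1) * (sa s2 * sa s1 * sm s2 / sm s1) /\
  1 - sb s2' / sb s1' * sm s2 = (1 - sb s2' / sb s1) * (sa s2' * sm s2).
Proof.
  intros [[Ha1 [Hb1 Hm1]] [[Ha2 [Hb2 Hm2]] [_ [_ [_ [_ Hsh]]]]]].
  cbv zeta in Hsh; destruct Hsh as [_ [_ [Ea2' [Hden [Eb1' Eb2']]]]].
  assert (Hden' : sm s1 * sb s1 - sm s2 * sa s2 * (sm s1 * sb s1 - sb s2) <> 0).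
  { apply (Cmult_neq_0_eq _ _ (sm s1 * sb s1) Hden).
    - apply Cmult_neq_0; assumption.
    - field; auto. }
  rewrite Ea2', Eb1', Eb2'.
  split; [| split]; field; repeat split; auto.
Qed.

Lemma shaping_regions_neg (s1 s2 s1' s2' : shape) :
  shaping_at false s1 s2 s1' s2' ->
  1 - / (sb s2 / sb s1 / sm s1) = (1 - sb s1 / sb s2') * (sa s1 * sm s1) /\
  1 - / (sb s2 / sb s1' * sm s2 / sm s1)
    = (1 - sb s1 / sb s2') * (sa s2 * sa s1 * sm s1 / sm s2) /\
  1 - / (sb s2' / sb s1' * sm s2) = (1 - sb s1 / sb s2') * (sa s2' / sm s2).
Proof.
  intros [[Ha1 [Hb1 Hm1]] [[Ha2 [Hb2 Hm2]] [[_ [Hb1' _]] [_ [_ [_ Hsh]]]]]].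
  cbv zeta in Hsh; destruct Hsh as [_ [_ [Ea2' [Eb1' [Hden Eb2']]]]].
  assert (Hden' : sm s1 * sa s1 * sb s2 - (sb s2 - sm s1 * sb s1) <> 0).
  { apply (Cmult_neq_0_eq _ _ (sm s1 * sa s1 * sb s2) Hden).
    - repeat apply Cmult_neq_0; assumption.
    - field; auto. }
  assert (Hb1'' : sm s2 * sb s2 - sa s2 * (sb s2 - sm s1 * sb s1) <> 0).
  { apply (Cmult_neq_0_eq _ _ (sm s1) Hb1'); [assumption |].
    rewrite Eb1'; field; auto. }
  rewrite Ea2', Eb1', Eb2'.
  split; [| split]; field; repeat split; auto.
Qed.

Lemma Cmult_m1_l (x : C) : -1 * x = - x.
Proof. ring. Qed.

Lemma one_sub_div_neq_0 (x y : C) : y <> 0 -> x <> y -> 1 - x / y <> 0.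
Proof.
  intros Hy Hxy H; apply (Cminus_eq_contra y x); auto.
  replace (y - x) with ((1 - x / y) * y) by (field; assumption).
  rewrite H; ring.
Qed.

Ltac E2_expand :=
  repeat (rewrite E2_add || rewrite E2_sub || rewrite E2_opp).

Lemma flattening_regions (pos : bool) (s1 s2 s1' s2' : shape) (f : flat) :
  shaping_at pos s1 s2 s1' s2' -> flattening_at pos s1 s2 s1' s2' f -> ~ pinched s1 s2' ->
  forall R, E2 (zeta1 (epsC pos) f R) * (1 - E2 (zeta0 (epsC pos) f R)) = 1.
Proof.
  intros Hs Hf Hnp R.
  destruct Hf as [Em1 [Em2 [Eb1 [Eb2 [Eb1' [Eb2' [Ea1 [Ea2 [_ [Ea2' Ekap]]]]]]]]]].
  specialize (Ekap Hnp); unfold ratio_eps in Ekap.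
  assert (EgW : E2 (gW f) = sa s1 * E2 (gN f)).
  { rewrite <- Ea1, <- E2_add; f_equal; ring. }
  assert (EgS : E2 (gS f) = sa s2 * (sa s1 * E2 (gN f))).
  { rewrite <- Ea2, <- EgW, <- E2_add; f_equal; ring. }
  assert (EgE : E2 (gE f) = sa s2' * E2 (gN f)).
  { rewrite <- Ea2', <- E2_add; f_equal; ring. }
  pose proof (E2_neq_0 (gN f)).
  assert (Hnp' : sb s1 <> sb s2') by auto.
  destruct pos; [destruct (shaping_regions_pos s1 s2 s1' s2' Hs) as [IW [IS IE]]
                | destruct (shaping_regions_neg s1 s2 s1' s2' Hs) as [IW [IS IE]]];
  destruct Hs as [[Ha1 [Hb1 Hm1]] [[Ha2 [_ Hm2]] [_ [[Ha2' [Hb2' _]] _]]]];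
  destruct R; cbn [zeta0 zeta1 epsC]; rewrite ?Cmult_1_l, ?Cmult_m1_l; E2_expand;
  rewrite Ekap, ?EgW, ?EgS, ?EgE, ?Em1, ?Em2, ?Eb1, ?Eb2, ?Eb1', ?Eb2', ?IW, ?IS, ?IE.
  all: field.
  all: repeat split; auto using one_sub_div_neq_0, Cminus_eq_contra.
Qed.

Lemma zeta0_flat_add (e : C) (f g : flat) (R : region) :
  zeta0 e (flat_add f g) R = zeta0 e f R + zeta0 e g R.
Proof. destruct R; simpl; ring. Qed.

Lemma zeta1_flat_add (e : C) (f g : flat) (R : region) :
  zeta1 e (flat_add f g) R = zeta1 e f R + zeta1 e g R.
Proof. destruct R; simpl; ring. Qed.

Lemma integral_zeta (pos : bool) (g : flat) (R : region) :
  integral_flat g ->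
  is_integer (zeta0 (epsC pos) g R) /\ is_integer (zeta1 (epsC pos) g R).
Proof.
  intro Hg; unfold integral_flat in Hg; decompose [and] Hg.
  destruct R; simpl; split; prove_integer.
Qed.

Lemma alt_sum_zeta_pairing (pos : bool) (f g : flat) :
  epsC pos * alt_sum (fun R => zeta1 (epsC pos) g R * zeta0 (epsC pos) f R
                               - zeta0 (epsC pos) g R * zeta1 (epsC pos) f R)
  = lin_coef pos g f.
Proof. destruct pos; unfold alt_sum, lin_coef, vol_coef; simpl; ring. Qed.

Lemma crossing_volume_shift_unpinched (pos : bool) (s1 s2 s1' s2' : shape) (f g : flat) :
  shaping_at pos s1 s2 s1' s2' -> flattening_at pos s1 s2 s1' s2' f -> ~ pinched s1 s2' ->
  integral_flat g ->
  exists n : C, is_integer n /\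
    crossing_volume pos s1 s2' (flat_add f g)
    = crossing_volume pos s1 s2' f + 2 * RtoC (PI ^ 2) * Ci * (lin_coef pos g f + n).
Proof.
  intros Hs Hf Hnp Hg.
  assert (Hshift : forall R, exists n : C, is_integer n /\
    Lhat (twopii * zeta0 (epsC pos) (flat_add f g) R)
         (twopii * zeta1 (epsC pos) (flat_add f g) R)
    = Lhat (twopii * zeta0 (epsC pos) f R) (twopii * zeta1 (epsC pos) f R)
      - 2 * RtoC (PI ^ 2) * (zeta1 (epsC pos) g R * zeta0 (epsC pos) f R
                             - zeta0 (epsC pos) g R * zeta1 (epsC pos) f R + n)).
  { intro R; rewrite zeta0_flat_add, zeta1_flat_add.
    destruct (integral_zeta pos g R Hg).
    apply Lhat_shift; [| assumption ..].
    exact (flattening_regions pos s1 s2 s1' s2' f Hs Hf Hnp R). }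
  destruct (Hshift RN) as [nN [HN EN]], (Hshift RW) as [nW [HW EW]],
           (Hshift RS) as [nS [HS ES]], (Hshift RE) as [nE [HE EE]].
  exists (epsC pos * (nN - nW + nS - nE)); split; [prove_integer |].
  rewrite !crossing_volume_unpinched by exact Hnp.
  rewrite <- (alt_sum_zeta_pairing pos f g); unfold alt_sum.
  rewrite EN, EW, ES, EE; ring.
Qed.

Lemma crossing_volume_shift (pos : bool) (s1 s2 s1' s2' : shape) (f g : flat) :
  shaping_at pos s1 s2 s1' s2' -> flattening_at pos s1 s2 s1' s2' f -> integral_flat g ->
  exists n : C, is_integer n /\
    crossing_volume pos s1 s2' (flat_add f g)
    = crossing_volume pos s1 s2' f + 2 * RtoC (PI ^ 2) * Ci * (lin_coef pos g f + n).
Proof.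
  intros Hs Hf Hg.
  destruct (Defs.Ceq_dec (sb s2') (sb s1)) as [Hp | Hnp].
  - exact (crossing_volume_shift_pinched pos s1 s2 s1' s2' f g Hs Hf Hp Hg).
  - exact (crossing_volume_shift_unpinched pos s1 s2 s1' s2' f g Hs Hf Hnp Hg).
Qed.

Definition flat0 : flat := Flat 0 0 0 0 0 0 0 0 0 0 0.

Lemma shift_param_flat_add (p : param) (k : Z) (f : flat) :
  shift_param p k f = flat_add f (shift_param p k flat0).
Proof. destruct p, f; unfold flat_add, flat0; simpl; f_equal; ring. Qed.

Lemma integral_shift_param (p : param) (k : Z) : integral_flat (shift_param p k flat0).
Proof. destruct p; unfold integral_flat; simpl; repeat split; prove_integer. Qed.

Lemma lin_coef_shift_param (pos : bool) (p : param) (k : Z) (f : flat) :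
  lin_coef pos (shift_param p k flat0) f = IZR k * vol_coef pos p f.
Proof. destruct p; unfold lin_coef; simpl; ring. Qed.

Theorem lemma3p7 :
  forall (pos : bool) (s1 s2 s1' s2' : shape) (f : flat),
    shaping_at pos s1 s2 s1' s2' ->
    flattening_at pos s1 s2 s1' s2' f ->
    forall (p : param) (k : Z),
      exists n : Z,
        crossing_volume pos s1 s2' (shift_param p k f)
        = crossing_volume pos s1 s2' f
          + 2 * RtoC (PI ^ 2) * Ci * (RtoC (IZR k) * vol_coef pos p f + RtoC (IZR n)).
Proof.
  intros pos s1 s2 s1' s2' f Hs Hf p k.
  destruct (crossing_volume_shift pos s1 s2 s1' s2' f (shift_param p k flat0) Hs Hf
              (integral_shift_param p k)) as [n [[m ->] Hshift]].
  exists m; rewrite shift_param_flat_add, Hshift, lin_coef_shift_param; reflexivity.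
Qed.
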